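(* Let $X_1,X_2,X_3$ be Polish spaces and let $\mu_{12},\mu_{13},\mu_{23}$ be a consistent family of probability measures on $X_i\times X_j$, with common one-dimensional marginals $\mu_1,\mu_2,\mu_3$. If $\mu_{ij}\ge\frac23\,\mu_i\otimes\mu_j$ (as measures) for all $1\le i<j\le3$, then $\Pi(\mu_{12},\mu_{13},\mu_{23})$ is nonempty.
   Context: Consistency: any two of $\mu_{12},\mu_{13},\mu_{23}$ have the same marginal on their common coordinate; $\mu_i$ denotes this common marginal on $X_i$. $\Pi(\mu_{12},\mu_{13},\mu_{23})$ is the set of probability measures on $X_1\times X_2\times X_3$ whose projection onto $X_i\times X_j$ is $\mu_{ij}$ for all $i<j$. *)

From HB Require Import structures.
From mathcomp Require Import all_boot all_order all_algebra.
From mathcomp Require Import all_classical all_reals all_analysis.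
Set Implicit Arguments. Unset Strict Implicit. Unset Printing Implicit Defensive.
Import Order.TTheory GRing.Theory Num.Theory.
Local Open Scope classical_set_scope.
Local Open Scope ring_scope.

Definition is_metric (R : realType) (T : Type) (dist : T -> T -> R) : Prop :=
  [/\ forall x y, 0 <= dist x y,
      forall x y, dist x y = 0 <-> x = y,
      forall x y, dist x y = dist y x &
      forall x y z, dist x z <= dist x y + dist y z].

Definition metric_open (R : realType) (T : Type) (dist : T -> T -> R)
  (A : set T) : Prop :=
  forall x, A x -> exists2 e : R, 0 < e & forall y, dist x y < e -> A y.

Definition metric_complete (R : realType) (T : Type) (dist : T -> T -> R) : Prop :=
  forall u : nat -> T,
    (forall e : R, 0 < e -> exists N, forall m n, (N <= m)%N -> (N <= n)%N ->
        dist (u m) (u n) < e) ->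
    exists l : T, forall e : R, 0 < e -> exists N, forall n, (N <= n)%N ->
        dist (u n) l < e.

Definition metric_separable (R : realType) (T : Type) (dist : T -> T -> R) : Prop :=
  exists D : set T, countable D /\
    forall x (e : R), 0 < e -> exists2 y, D y & dist x y < e.

Definition polish_borel (R : realType) d (T : measurableType d) : Prop :=
  exists dist : T -> T -> R,
    [/\ is_metric dist, metric_complete dist, metric_separable dist &
        (measurable : set (set T)) = <<s metric_open dist >>].

Definition is_image (R : realType) d1 d2 (T1 : measurableType d1)
  (T2 : measurableType d2) (mu : set T1 -> \bar R) (f : T1 -> T2)
  (nu : set T2 -> \bar R) : Prop :=
  forall A : set T2, measurable A -> pushforward mu f A = nu A.

Definition measure_ge (R : realType) d (T : measurableType d)
  (mu : set T -> \bar R) (c : R) (nu : set T -> \bar R) : Prop :=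
  forall A : set T, measurable A -> (c%:E * nu A <= mu A)%E.

From HB Require Import structures.
From mathcomp Require Import all_boot all_order all_algebra.
From mathcomp Require Import all_classical all_reals all_analysis.
From mathcomp Require Import ring.
Set Implicit Arguments. Unset Strict Implicit. Unset Printing Implicit Defensive.
Import Order.TTheory GRing.Theory Num.Theory.
Local Open Scope classical_set_scope.
Local Open Scope ring_scope.

(* The proof is an explicit construction.
   Since mu_ij >= 2/3 mu_i (x) mu_j, the "excess"
       nu_ij := mu_ij - 2/3 mu_i (x) mu_j
   is a (positive) measure, of total mass 1/3 and with marginals mu_i / 3
   and mu_j / 3.  The candidate
       mu := nu_12 (x) mu_3 + nu_13 (x) mu_2 + nu_23 (x) mu_1
   (each term rearranged to live on (X1 * X2) * X3) gives the box
   A * B * C the mass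
       mu_12(A*B) mu_3(C) + mu_13(A*C) mu_2(B) + mu_23(B*C) mu_1(A)
       - 2 mu_1(A) mu_2(B) mu_3(C),
   which equals mu_12(A*B) for C = X3 by consistency, and symmetrically for
   the other two marginals.  As measures on a product are determined by
   their values on rectangles, mu has the required pairwise marginals. *)

(* Outside measurable sets the difference is
   clipped at 0; the comparison hypothesis is an argument of [excess] so
   that the measure structure can be attached to [excess n_le_m]. *)
Section excess_measure.
Local Open Scope ereal_scope.
Context d (T : measurableType d) (R : realType).
Variables (m n : {finite_measure set T -> \bar R}) (c : R).

Definition excess (_ : forall A, measurable A -> c%:E * n A <= m A)
  (A : set T) : \bar R := (Num.max 0 (fine (m A) - c * fine (n A)))%:E.

Hypothesis n_le_m : forall A, measurable A -> c%:E * n A <= m A.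
Local Notation nu := (excess n_le_m).

Let excess_fine A : measurable A -> nu A = (fine (m A) - c * fine (n A))%:E.
Proof.
move=> mA; congr EFin; apply/max_idPr; rewrite subr_ge0 -lee_fin EFinM.
by rewrite !fineK ?fin_num_measure ?n_le_m.
Qed.

Let difference := cadd (charge_of_finite_measure m)
  (cscale (- c) (charge_of_finite_measure n)).

Let excess_difference A : measurable A -> nu A = difference A.
Proof.
move=> mA; have -> : difference A = m A + (- c)%:E * n A by [].
rewrite excess_fine// -(fineK (fin_num_measure m _ mA)).
by rewrite -(fineK (fin_num_measure n _ mA)) /= -EFinM -EFinD mulNr.
Qed.

Let excess0 : nu set0 = 0.
Proof. by rewrite /excess !measure0 mulr0 subr0 maxxx. Qed.

Let excess_ge0 A : 0 <= nu A.
Proof. by rewrite lee_fin le_max lexx. Qed.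

(* Sigma-additivity is inherited from the charge m + (-c) n, with which the
   excess agrees on measurable sets. *)
Let excess_sigma_additive : semi_sigma_additive nu.
Proof.
move=> F mF tF mUF; rewrite excess_difference//.
under eq_fun do under eq_bigr => i _ do rewrite excess_difference//.
exact: charge_semi_sigma_additive.
Qed.

HB.instance Definition _ := isMeasure.Build _ _ _ nu
  excess0 excess_ge0 excess_sigma_additive.

Lemma excessE A : measurable A ->
  (nu : {measure set T -> \bar R}) A = (fine (m A) - c * fine (n A))%:E.
Proof. exact: excess_fine. Qed.

End excess_measure.

(* The image of a measure under a measurable map.  This is the library's
   [pushforward] packaged with the measurability proof, so that its measure
   structure can be found. *)
Section image_measure.
Context d d' (T1 : measurableType d) (T2 : measurableType d') (R : realType).

Definition image_measure (m : {measure set T1 -> \bar R}) (f : T1 -> T2)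
  (mf : measurable_fun [set: T1] f) : {measure set T2 -> \bar R}.
Proof. refine (pushforward m f : {measure set T2 -> \bar R}); exact: mf. Defined.

Lemma image_measureE m f (mf : measurable_fun [set: T1] f) A :
  image_measure m mf A = m (f @^-1` A).
Proof. by []. Qed.

End image_measure.

Lemma measure_add3E d (T : measurableType d) (R : realType)
  (m1 m2 m3 : {measure set T -> \bar R}) A :
  measure_add (measure_add m1 m2) m3 A = (m1 A + m2 A + m3 A)%E.
Proof. by rewrite measure_addE; congr (_ + _)%E; exact: measure_addE. Qed.

(* The product measure on a rectangle, stated for the product seen as a
   plain measure, the form in which it occurs inside sums of measures. *)
Lemma product_rectangleE d1 d2 (T1 : measurableType d1) (T2 : measurableType d2)
    (R : realType) (m1 : {measure set T1 -> \bar R}) (m2 : probability T2 R) A1 A2 :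
  measurable A1 -> measurable A2 ->
  ((m1 \x m2)%E : {measure set (T1 * T2) -> \bar R}) (A1 `*` A2) = (m1 A1 * m2 A2)%E.
Proof. exact: product_measure1E. Qed.

Lemma fine_product_rectangle d1 d2 (T1 : measurableType d1)
    (T2 : measurableType d2) (R : realType) (P : probability T1 R)
    (Q : probability T2 R) A B : measurable A -> measurable B ->
  fine ((P \x Q)%E (A `*` B)) = fine (P A) * fine (Q B).
Proof. by move=> mA mB; rewrite product_measure1E// fineM// fin_num_measure. Qed.

Lemma probabilityE d (T : measurableType d) (R : realType)
  (P : probability T R) A : measurable A -> P A = (fine (P A))%:E.
Proof. by move=> mA; rewrite fineK// fin_num_measure. Qed.

Lemma image_fstE d1 d2 (T1 : measurableType d1) (T2 : measurableType d2)
    (R : realType) (m : set (T1 * T2) -> \bar R) (p : set T1 -> \bar R) A :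
  is_image m fst p -> measurable A -> m (A `*` setT) = p A.
Proof. by move=> mp mA; rewrite setXT -mp. Qed.

Lemma image_sndE d1 d2 (T1 : measurableType d1) (T2 : measurableType d2)
    (R : realType) (m : set (T1 * T2) -> \bar R) (q : set T2 -> \bar R) B :
  is_image m snd q -> measurable B -> m (setT `*` B) = q B.
Proof. by move=> mq mB; rewrite setTX -mq. Qed.

(* A measure on a product with finite total mass is determined by its values
   on measurable rectangles: these form a pi-system generating the product
   sigma-algebra. *)
Lemma measure_eq_on_rectangles d1 d2 (T1 : measurableType d1)
    (T2 : measurableType d2) (R : realType)
    (m1 m2 : {measure set (T1 * T2) -> \bar R}) :
  (m1 [set: T1 * T2] < +oo)%E ->
  (forall A B, measurable A -> measurable B -> m1 (A `*` B) = m2 (A `*` B)) ->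
  forall X, measurable X -> m1 X = m2 X.
Proof.
move=> m1_fin m1m2.
pose C := [set A `*` B | A in @measurable _ T1 & B in @measurable _ T2].
apply: (measure_unique C (fun=> setT)).
- exact: measurable_prod_measurableType.
- move=> _ _ [A1 mA1 [A2 mA2 <-]] [B1 mB1 [B2 mB2 <-]].
  exists (A1 `&` B1); first exact: measurableI.
  by exists (A2 `&` B2); [exact: measurableI | rewrite setXI].
- by move=> _; exists setT => //; exists setT => //; rewrite setXTT.
- by rewrite bigcup_const.
- by move=> _ [A mA [B mB <-]]; exact: m1m2.
- by [].
Qed.

Lemma is_image_of_rectangles d d1 d2 (T : measurableType d)
    (T1 : measurableType d1) (T2 : measurableType d2) (R : realType)
    (P : probability T R) (f : T -> T1 * T2) (Q : {measure set (T1 * T2) -> \bar R}) :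
  measurable_fun [set: T] f ->
  (forall A B, measurable A -> measurable B -> P (f @^-1` (A `*` B)) = Q (A `*` B)) ->
  is_image P f Q.
Proof.
move=> mf PQ X mX; apply: (measure_eq_on_rectangles (m1 := image_measure P mf)) => //.
have P1 : (P : {measure set T -> \bar R}) [set: T] = 1%E := probability_setT P.
by rewrite image_measureE preimage_setT P1 ltry.
Qed.

Lemma measurable_fst_fst d d' d'' (T1 : measurableType d) (T2 : measurableType d')
  (T3 : measurableType d'') : measurable_fun [set: (T1 * T2) * T3] (fun x => x.1.1).
Proof. exact: measurableT_comp measurable_fst measurable_fst. Qed.

Lemma measurable_snd_fst d d' d'' (T1 : measurableType d) (T2 : measurableType d')
  (T3 : measurableType d'') : measurable_fun [set: (T1 * T2) * T3] (fun x => x.1.2).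
Proof. exact: measurableT_comp measurable_snd measurable_fst. Qed.

Section coupling.
Context (R : realType) (d1 d2 d3 : measure_display)
  (X1 : measurableType d1) (X2 : measurableType d2) (X3 : measurableType d3)
  (mu1 : probability X1 R) (mu2 : probability X2 R) (mu3 : probability X3 R)
  (mu12 : probability (X1 * X2)%type R)
  (mu13 : probability (X1 * X3)%type R)
  (mu23 : probability (X2 * X3)%type R).
Hypotheses (h12_1 : is_image mu12 fst mu1) (h12_2 : is_image mu12 snd mu2)
  (h13_1 : is_image mu13 fst mu1) (h13_3 : is_image mu13 snd mu3)
  (h23_2 : is_image mu23 fst mu2) (h23_3 : is_image mu23 snd mu3)
  (hge12 : measure_ge mu12 (2 / 3) (mu1 \x mu2)%E)
  (hge13 : measure_ge mu13 (2 / 3) (mu1 \x mu3)%E)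
  (hge23 : measure_ge mu23 (2 / 3) (mu2 \x mu3)%E).

Let nu12 := excess (n := (mu1 \x mu2)%E : probability _ R) hge12.
Let nu13 := excess (n := (mu1 \x mu3)%E : probability _ R) hge13.
Let nu23 := excess (n := (mu2 \x mu3)%E : probability _ R) hge23.

Definition from132 (x : (X1 * X3) * X2) : (X1 * X2) * X3 := ((x.1.1, x.2), x.1.2).
Definition from231 (x : (X2 * X3) * X1) : (X1 * X2) * X3 := ((x.2, x.1.1), x.1.2).

Lemma measurable_from132 : measurable_fun [set: (X1 * X3) * X2] from132.
Proof.
by apply/measurable_fun_pair; [apply/measurable_fun_pair|];
  [exact: measurable_fst_fst|exact: measurable_snd|exact: measurable_snd_fst].
Qed.

Lemma measurable_from231 : measurable_fun [set: (X2 * X3) * X1] from231.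
Proof.
by apply/measurable_fun_pair; [apply/measurable_fun_pair|];
  [exact: measurable_snd|exact: measurable_fst_fst|exact: measurable_snd_fst].
Qed.

Definition coupling := measure_add (measure_add (nu12 \x mu3)%E
  (image_measure (nu13 \x mu2)%E measurable_from132))
  (image_measure (nu23 \x mu1)%E measurable_from231).

Lemma from132_box A B C :
  from132 @^-1` ((A `*` B) `*` C) = (A `*` C) `*` B.
Proof. by apply/seteqP; split => -[[x z] y] /=; tauto. Qed.

Lemma from231_box A B C :
  from231 @^-1` ((A `*` B) `*` C) = (B `*` C) `*` A.
Proof. by apply/seteqP; split => -[[y z] x] /=; tauto. Qed.

Lemma coupling_box A B C : measurable A -> measurable B -> measurable C ->
  coupling ((A `*` B) `*` C) =
  (fine (mu12 (A `*` B)) * fine (mu3 C) + fine (mu13 (A `*` C)) * fine (mu2 B)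
   + fine (mu23 (B `*` C)) * fine (mu1 A)
   - 2 * (fine (mu1 A) * fine (mu2 B) * fine (mu3 C)))%:E.
Proof.
move=> mA mB mC.
have [mAB mAC mBC] := And3 (measurableX mA mB) (measurableX mA mC) (measurableX mB mC).
rewrite /coupling measure_add3E !image_measureE from132_box from231_box.
rewrite !product_rectangleE// /nu12 /nu13 /nu23 !excessE// !fine_product_rectangle//.
rewrite (probabilityE mu1 mA) (probabilityE mu2 mB) (probabilityE mu3 mC) /=.
rewrite -!EFinM -!EFinD; congr EFin.
by field.
Qed.

Lemma coupling_marginal12 A B : measurable A -> measurable B ->
  coupling ((fun x => (x.1.1, x.1.2)) @^-1` (A `*` B)) = mu12 (A `*` B).
Proof.
move=> mA mB.
have -> : (fun x : (X1 * X2) * X3 => (x.1.1, x.1.2)) @^-1` (A `*` B) = (A `*` B) `*` setT.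
  by apply/seteqP; split => -[[x y] z] /=; tauto.
rewrite coupling_box// (image_fstE h13_1 mA) (image_fstE h23_2 mB) probability_setT.
rewrite [RHS](probabilityE mu12 (measurableX mA mB)) /=; congr EFin; ring.
Qed.

Lemma coupling_marginal13 A C : measurable A -> measurable C ->
  coupling ((fun x => (x.1.1, x.2)) @^-1` (A `*` C)) = mu13 (A `*` C).
Proof.
move=> mA mC.
have -> : (fun x : (X1 * X2) * X3 => (x.1.1, x.2)) @^-1` (A `*` C) = (A `*` setT) `*` C.
  by apply/seteqP; split => -[[x y] z] /=; tauto.
rewrite coupling_box// (image_fstE h12_1 mA) (image_sndE h23_3 mC) probability_setT.
rewrite [RHS](probabilityE mu13 (measurableX mA mC)) /=; congr EFin; ring.
Qed.

Lemma coupling_marginal23 B C : measurable B -> measurable C ->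
  coupling ((fun x => (x.1.2, x.2)) @^-1` (B `*` C)) = mu23 (B `*` C).
Proof.
move=> mB mC.
have -> : (fun x : (X1 * X2) * X3 => (x.1.2, x.2)) @^-1` (B `*` C) = (setT `*` B) `*` C.
  by apply/seteqP; split => -[[x y] z] /=; tauto.
rewrite coupling_box// (image_sndE h12_2 mB) (image_sndE h13_3 mC) probability_setT.
rewrite [RHS](probabilityE mu23 (measurableX mB mC)) /=; congr EFin; ring.
Qed.

Lemma coupling_setT : coupling [set: (X1 * X2) * X3] = 1%E.
Proof.
have -> : [set: (X1 * X2) * X3] = (setT `*` setT) `*` setT by rewrite !setXTT.
by rewrite coupling_box// !setXTT !probability_setT /=; congr EFin; ring.
Qed.

HB.instance Definition _ := Measure.on coupling.
HB.instance Definition _ :=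
  Measure_isProbability.Build _ _ _ coupling coupling_setT.

Lemma coupling_exists : exists mu : probability ((X1 * X2) * X3)%type R,
  [/\ is_image mu (fun x => (x.1.1, x.1.2)) mu12,
      is_image mu (fun x => (x.1.1, x.2)) mu13 &
      is_image mu (fun x => (x.1.2, x.2)) mu23].
Proof.
exists coupling; split; apply: is_image_of_rectangles.
- by apply: measurable_fun_pair; [exact: measurable_fst_fst|exact: measurable_snd_fst].
- exact: coupling_marginal12.
- by apply: measurable_fun_pair; [exact: measurable_fst_fst|exact: measurable_snd].
- exact: coupling_marginal13.
- by apply: measurable_fun_pair; [exact: measurable_snd_fst|exact: measurable_snd].
- exact: coupling_marginal23.
Qed.

End coupling.

Unset Implicit Arguments.

Theorem mainTheorem6 (R : realType)
  (d1 d2 d3 : measure_display)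
  (X1 : measurableType d1) (X2 : measurableType d2) (X3 : measurableType d3)
  (hX1 : polish_borel R X1) (hX2 : polish_borel R X2) (hX3 : polish_borel R X3)
  (mu1 : probability X1 R) (mu2 : probability X2 R) (mu3 : probability X3 R)
  (mu12 : probability (X1 * X2)%type R)
  (mu13 : probability (X1 * X3)%type R)
  (mu23 : probability (X2 * X3)%type R)
  (h12_1 : is_image mu12 fst mu1) (h12_2 : is_image mu12 snd mu2)
  (h13_1 : is_image mu13 fst mu1) (h13_3 : is_image mu13 snd mu3)
  (h23_2 : is_image mu23 fst mu2) (h23_3 : is_image mu23 snd mu3)
  (hge12 : measure_ge mu12 (2 / 3) (mu1 \x mu2)%E)
  (hge13 : measure_ge mu13 (2 / 3) (mu1 \x mu3)%E)
  (hge23 : measure_ge mu23 (2 / 3) (mu2 \x mu3)%E) :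
  exists mu : probability ((X1 * X2) * X3)%type R,
    [/\ is_image mu (fun x => (x.1.1, x.1.2)) mu12,
        is_image mu (fun x => (x.1.1, x.2)) mu13 &
        is_image mu (fun x => (x.1.2, x.2)) mu23].
Proof.
exact: (coupling_exists h12_1 h12_2 h13_1 h13_3 h23_2 h23_3 hge12 hge13 hge23).
Qed.
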